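(* Let $G$ be a graph with $n\ge 2$ vertices that is both connected and co-connected. Then every connecting hypergraph $H$ of $G$ satisfies $\mathrm{cost}(H)\ge \frac{2(n-1)}{3}$.
   Context: All graphs are finite, simple and undirected. $G[X]$ denotes the subgraph induced by $X\subseteq V(G)$. The complement $\bar G$ has vertex set $V(G)$ and an edge $xy$ ($x\neq y$) iff $xy\notin E(G)$; $G$ is co-connected if $\bar G$ is connected. A connecting hypergraph of $G$ is a set $H$ of subsets of $V(G)$ such that every $E\in H$ satisfies $|E|\ge 2$ and $G[E]$ is connected, and for every pair of distinct non-adjacent vertices $u,v$ of $G$ there exists $E\in H$ with $u,v\in E$. Its cost is $\mathrm{cost}(H)=\sum_{E\in H}(|E|-2)$. *)

From mathcomp Require Import all_boot.
Set Implicit Arguments. Unset Strict Implicit. Unset Printing Implicit Defensive.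

Definition simple_graph (T : finType) (e : rel T) : Prop :=
  symmetric e /\ irreflexive e.

Definition induced_rel (T : finType) (e : rel T) (X : {set T}) : rel T :=
  [rel x y | [&& x \in X, y \in X & e x y]].

Definition connected_on (T : finType) (e : rel T) (X : {set T}) : Prop :=
  forall x y, x \in X -> y \in X -> connect (induced_rel e X) x y.

Definition graph_connected (T : finType) (e : rel T) : Prop :=
  connected_on e [set: T].

Definition compl_rel (T : finType) (e : rel T) : rel T :=
  [rel x y | (x != y) && ~~ e x y].

Definition co_connected (T : finType) (e : rel T) : Prop :=
  graph_connected (compl_rel e).

Definition connecting_hypergraph (T : finType) (e : rel T)
    (H : {set {set T}}) : Prop :=
  (forall E, E \in H -> 2 <= #|E| /\ connected_on e E) /\
  (forall u v, u != v -> ~~ e u v -> exists2 E, E \in H & (u \in E) && (v \in E)).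

(* cost(H) = sum over E in H of (|E| - 2); truncated subtraction is harmless
   since every hyperedge of a connecting hypergraph has |E| >= 2. *)
Definition hcost (T : finType) (H : {set {set T}}) : nat :=
  \sum_(E in H) (#|E| - 2).

From mathcomp Require Import all_boot.
From mathcomp Require Import zify.
Set Implicit Arguments. Unset Strict Implicit.

(* Replace every hyperedge E by the set of vertices it is really needed to
   link: all of E when |E| >= 4, and only the endpoints of its non-edges when
   |E| <= 3.  A connected G[E] on at most three vertices has a vertex adjacent
   to all others, so this link set has at most |E| - 1 elements; in both cases
   linking k vertices costs at least 2(k - 1)/3.  Since the link sets cover all
   non-edges of G, merging them one at a time, starting from a single vertex,
   produces a set closed under non-adjacency, which is the whole vertex set by
   co-connectivity; each merge adds at most k - 1 new vertices, so
   n - 1 <= sum (k_E - 1) <= 3/2 cost(H). *)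

Lemma uniq_size_le_card (T : finType) (s : seq T) (E : {set T}) :
  uniq s -> {subset s <= E} -> size s <= #|E|.
Proof. by move/card_uniqP <- => sE; apply/subset_leq_card/subsetP. Qed.

Lemma connect_step (T : finType) (r : rel T) x y :
  connect r x y -> x != y -> exists z, r x z.
Proof.
case/connectP => [[|z p]] /= => [_ -> |]; first by rewrite eqxx.
by case/andP => rxz _ _ _; exists z.
Qed.

Definition nonedge_part (T : finType) (e : rel T) (E : {set T}) : {set T} :=
  [set x in E | [exists y in E, (x != y) && ~~ e x y]].

Definition link_set (T : finType) (e : rel T) (E : {set T}) : {set T} :=
  if 4 <= #|E| then E else nonedge_part e E.

Section SmallHyperedges.

Variables (T : finType) (e : rel T).
Hypothesis (e_sym : symmetric e) (e_irr : irreflexive e).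

Lemma connected_on_neighbor (E : {set T}) x y :
  connected_on e E -> x \in E -> y \in E -> x != y ->
  exists2 z, z \in E & e x z.
Proof.
move=> cE xE yE /(connect_step (cE x y xE yE)) [z /and3P [_ zE xz]].
by exists z.
Qed.

Lemma connected_on_universal (E : {set T}) x :
  connected_on e E -> #|E| <= 3 -> x \in E ->
  exists2 z, z \in E & forall v, v \in E -> v != z -> e z v.
Proof.
move=> cE E3 xE.
have size_le3 s : uniq s -> {subset s <= E} -> size s <= 3.
  by move=> us sE; apply: leq_trans E3; apply: uniq_size_le_card.
have [x_univ | ] := boolP [forall (v | v \in E), (v != x) ==> e x v].
  by exists x => // v vE vx; move/forall_inP/(_ v vE)/implyP: x_univ; apply.
(* Otherwise x has a non-neighbour y in E; x and y have a common neighbour z,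
   which is adjacent to everything since a fourth vertex would break |E| <= 3. *)
case/forall_inPn => y yE; rewrite negb_imply => /andP [yx xy].
have [z zE xz] : exists2 z, z \in E & e x z.
  by apply: connected_on_neighbor cE xE yE _; rewrite eq_sym.
have [w wE yw] := connected_on_neighbor cE yE xE yx.
have zx : z != x by apply: contraTneq xz => ->; rewrite e_irr.
have zy : z != y by apply: contraNneq xy => <-.
have wy : w != y by apply: contraTneq yw => ->; rewrite e_irr.
have wx : w != x by apply: contraNneq xy => <-; rewrite e_sym.
have wz : w = z.
  apply/eqP/negPn/negP => wz; suff : 4 <= 3 by [].
  apply: (size_le3 [:: x; y; z; w]); last first.
    by move=> v; rewrite !inE => /or4P [] /eqP ->.
  by rewrite /= !inE !negb_or !(eq_sym x) (eq_sym y z) (eq_sym y w) (eq_sym z w) yx zx wx zy wy wz.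
subst w; exists z => // v vE vz; apply/negPn/negP => nzv; suff : 4 <= 3 by [].
have vx : v != x by apply: contraNneq nzv => ->; rewrite e_sym.
have vy : v != y by apply: contraNneq nzv => ->; rewrite e_sym.
apply: (size_le3 [:: x; y; z; v]); last first.
  by move=> u; rewrite !inE => /or4P [] /eqP ->.
by rewrite /= !inE !negb_or !(eq_sym x) (eq_sym y z) (eq_sym y v) (eq_sym z v) yx zx vx zy vy vz.
Qed.

Lemma card_nonedge_part (E : {set T}) :
  connected_on e E -> #|E| <= 3 -> #|nonedge_part e E| <= #|E| - 1.
Proof.
move=> cE E3; have [-> | [x xE]] := set_0Vmem E.
  by rewrite cards0 leqn0 cards_eq0; apply/eqP/setP => v; rewrite !inE.
have [z zE z_univ] := connected_on_universal cE E3 xE.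
have sub : nonedge_part e E \subset E :\ z.
  apply/subsetP => v; rewrite !inE => /andP [vE /exists_inP [u uE /andP [vu nevu]]].
  rewrite vE andbT; apply: contraNneq nevu => vz.
  by rewrite vz z_univ // -vz eq_sym.
by rewrite (cardsD1 z E) zE add1n subSS subn0; apply: subset_leq_card.
Qed.

Lemma link_set_cost (E : {set T}) :
  connected_on e E -> 2 * (#|link_set e E| - 1) <= 3 * (#|E| - 2).
Proof.
rewrite /link_set; case: (leqP 4 #|E|) => [E4 _ | E3 cE]; first lia.
have := card_nonedge_part cE E3; lia.
Qed.

End SmallHyperedges.

Lemma mem_link_set (T : finType) (e : rel T) (E : {set T}) u v :
  u \in E -> v \in E -> u != v -> ~~ e u v -> u \in link_set e E.
Proof.
rewrite /link_set => uE vE uv neuv; case: ifP => // _.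
by rewrite inE uE; apply/exists_inP; exists v; rewrite ?uv.
Qed.

Lemma exists_saturated_superset (T I : finType) (f : I -> {set T})
    (P : {set I}) (A : {set T}) :
  exists B : {set T}, [/\ A \subset B,
    #|B| <= #|A| + \sum_(i in P) (#|f i| - 1) &
    forall i, i \in P -> [disjoint f i & B] || (f i \subset B)].
Proof.
move: {2}#|P| (leqnn #|P|) => n; elim: n P A => [|n IH] P A Pn.
  exists A; split; rewrite ?leq_addr // => i iP.
  by move: Pn; rewrite leqn0 cards_eq0 => /eqP P0; rewrite P0 inE in iP.
have [/exists_inP [i iP meet] | /exists_inPn disj] :=
  boolP [exists i in P, ~~ [disjoint f i & A]]; last first.
  by exists A; split; rewrite ?leq_addr // => i /disj /negPn ->.
have Pi : #|P :\ i| <= n by move: Pn; rewrite (cardsD1 i P) iP add1n ltnS.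
have [B [sB cardB satB]] := IH (P :\ i) (A :|: f i) Pi.
exists B; split.
- exact: subset_trans (subsetUl _ _) sB.
- have : 0 < #|A :&: f i| by rewrite card_gt0 setIC setI_eq0.
  have := cardsU A (f i); have := subset_leq_card (subsetIr A (f i)).
  by rewrite (big_setD1 i iP) /=; lia.
- move=> j jP; have [-> | ji] := eqVneq j i.
    by rewrite (subset_trans (subsetUr _ _) sB) orbT.
  by apply: satB; rewrite in_setD1 ji jP.
Qed.

Lemma co_connected_closed (T : finType) (e : rel T) (B : {set T}) x :
  co_connected e -> x \in B ->
  (forall u v, u != v -> ~~ e u v -> (u \in B) = (v \in B)) -> B = [set: T].
Proof.
move=> coconn xB closedB; apply/setP => y; rewrite inE.
have cl : closed (induced_rel (compl_rel e) [set: T]) B.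
  by move=> u v /and3P [_ _ /andP [uv neuv]]; apply: closedB.
by rewrite -(closed_connect cl (coconn x y (in_setT x) (in_setT y))).
Qed.

Theorem mainTheorem8 (T : finType) (e : rel T) (H : {set {set T}}) :
  simple_graph e -> 2 <= #|T| -> graph_connected e -> co_connected e ->
  connecting_hypergraph e H ->
  2 * (#|T| - 1) <= 3 * hcost H.
Proof.
move=> [e_sym e_irr] n2 _ coconn [hyperedge_ok cover].
have /card_gt0P [x0 _] : 0 < #|T| by apply: leq_trans n2.
have [B [x0B cardB satB]] := exists_saturated_superset (link_set e) H [set x0].
have Btot : B = [set: T].
  apply: co_connected_closed coconn (subsetP x0B x0 (set11 x0)) _ => u v uv neuv.
  have [E EH /andP [uE vE]] := cover u v uv neuv.
  have uL := mem_link_set uE vE uv neuv.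
  have vL : v \in link_set e E by rewrite (mem_link_set vE uE) 1?eq_sym 1?e_sym.
  by case/orP: (satB E EH) => [/disjointFr dj | /subsetP sub]; rewrite ?dj ?sub.
have cost : 2 * \sum_(E in H) (#|link_set e E| - 1) <= 3 * hcost H.
  rewrite /hcost !big_distrr /=; apply: leq_sum => E EH.
  exact: link_set_cost e_sym e_irr _ (hyperedge_ok E EH).2.
move: cardB cost; rewrite Btot cardsT cards1; set S := \sum_(_ in H) _; lia.
Qed.
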